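(* Consider the stochastic extra-momentum scheme (defined in the context) with non-negative parameters $\alpha,\gamma,\tau$ satisfying, for some constant $\theta\in(0,1]$, $$1+\alpha\mu-\gamma\ge1+\frac{\theta}{\kappa},\qquad\frac{\alpha}{\tau}=1+\frac{\theta}{\kappa},\qquad\frac{1}{8\tau^2L^2+2\gamma}\ge1+\frac{\theta}{\kappa}.$$ Then for every $k\ge0$, $$\mathbb E\big[\|z^k-z^*\|^2\big]\le2\Big(1+\frac{\theta}{\kappa}\Big)^{-k}\|z^0-z^*\|^2+\Big(\frac{\kappa}{\theta}+1\Big)\cdot32\tau^2\sigma^2+\frac{2\kappa\alpha\delta^2}{\theta\mu}.$$
   Context: Let $\mathcal Z\subseteq\mathbb R^n$ be a nonempty closed convex set. Let $F:\mathcal Z\to\mathbb R^n$ satisfy $(F(z)-F(z'))^\top(z-z')\ge\mu\|z-z'\|^2$ and $\|F(z)-F(z')\|\le L\|z-z'\|$ for all $z,z'\in\mathcal Z$, where $0<\mu\le L$; $\kappa=L/\mu$. Let $z^*$ be the unique point of $\mathcal Z$ with $F(z^* )^\top(z-z^* )\ge 0$ for all $z\in\mathcal Z$. $P_{\mathcal Z}$ denotes Euclidean projection onto $\mathcal Z$. A stochastic oracle returns $\hat F(z,\xi)$ for a random sample $\xi$, and satisfies, for every $z\in\mathcal Z$, $\mathbb E_\xi\|\hat F(z,\xi)-F(z)\|\le\delta$ and $\mathbb E_\xi\|\hat F(z,\xi)-F(z)\|^2\le\sigma^2$ for constants $\delta,\sigma\ge0$. Each oracle call $\hat F(z^j)$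 means $\hat F(z^j,\xi^j)$ with a fresh sample independent of all previous samples. The stochastic extra-momentum scheme: starting from $z^0\in\mathcal Z$ with $z^{-1}:=z^0$ and $\hat F(z^{-1}):=\hat F(z^0)$, for $k\ge0$, $z^{k+1}=P_{\mathcal Z}(z^k-\alpha\hat F(z^k)+\gamma(z^k-z^{k-1})-\tau(\hat F(z^k)-\hat F(z^{k-1})))$. *)

From HB Require Import structures.
From mathcomp Require Import all_boot all_order all_algebra.
From mathcomp Require Import all_classical all_reals all_analysis.
Set Implicit Arguments. Unset Strict Implicit. Unset Printing Implicit Defensive.
Import Order.TTheory GRing.Theory Num.Theory.
Import numFieldNormedType.Exports.
Local Open Scope classical_set_scope.
Local Open Scope ring_scope.

Definition dotv {R : realType} {n : nat} (u v : 'rV[R]_n) : R :=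
  \sum_(i < n) u ord0 i * v ord0 i.
Definition normv {R : realType} {n : nat} (u : 'rV[R]_n) : R :=
  Num.sqrt (dotv u u).

Definition is_projection {R : realType} {n : nat} (Z : set 'rV[R]_n)
  (PZ : 'rV[R]_n -> 'rV[R]_n) : Prop :=
  forall x, Z (PZ x) /\ (forall y, Z y -> normv (x - PZ x) <= normv (x - y)).

Definition vecB (R : realType) (n : nat) := g_sigma_algebraType (@open 'rV[R]_n).

Definition scons {X : Type} (x : X) (s : nat -> X) : nat -> X :=
  fun j => match j with 0 => x | j'.+1 => s j' end.

(* Expectation over k independent samples xi^0, ..., xi^(k-1), each with law mu,
   of a nonnegative quantity g depending on the sample sequence (through its
   first k entries): the iterated (= product, by Tonelli) integral
   \int mu(dxi^0) ... \int mu(dxi^(k-1)) g(xi^0, ..., xi^(k-1)). *)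
Fixpoint iexp {d : measure_display} {X : measurableType d} {R : realType}
  (mu : probability X R) (k : nat) (g : (nat -> X) -> \bar R) : \bar R :=
  match k with
  | 0 => g (fun _ => point)
  | k'.+1 => (\int[mu]_x iexp mu k' (fun s => g (scons x s)))%E
  end.

(* The state at step k is (z^k, z^(k-1)); the update uses
   hatF(z^k) = Fh z^k (s k) and hatF(z^(k-1)) = Fh z^(k-1) (s (k-1)),
   with the convention z^(-1) = z^0 and hatF(z^(-1)) = hatF(z^0) = Fh z^0 (s 0). *)
Fixpoint sem_state {R : realType} {n : nat} {X : Type}
  (PZ : 'rV[R]_n -> 'rV[R]_n) (Fh : 'rV[R]_n -> X -> 'rV[R]_n)
  (alpha gamma tau : R) (z0 : 'rV[R]_n) (s : nat -> X) (k : nat)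
  : 'rV[R]_n * 'rV[R]_n :=
  match k with
  | 0 => (z0, z0)
  | k'.+1 =>
      let zk := (sem_state PZ Fh alpha gamma tau z0 s k').1 in
      let zkm1 := (sem_state PZ Fh alpha gamma tau z0 s k').2 in
      let Fk := Fh zk (s k') in
      let Fkm1 := if k' is k''.+1 then Fh zkm1 (s k'') else Fh z0 (s 0) in
      (PZ (zk - alpha *: Fk + gamma *: (zk - zkm1) - tau *: (Fk - Fkm1)), zk)
  end.

Definition sem_iter {R : realType} {n : nat} {X : Type}
  (PZ : 'rV[R]_n -> 'rV[R]_n) (Fh : 'rV[R]_n -> X -> 'rV[R]_n)
  (alpha gamma tau : R) (z0 : 'rV[R]_n) (s : nat -> X) (k : nat) : 'rV[R]_n :=
  (sem_state PZ Fh alpha gamma tau z0 s k).1.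

From HB Require Import structures.
From mathcomp Require Import all_boot all_order all_algebra.
From mathcomp Require Import all_classical all_reals all_analysis.
From mathcomp Require Import measurable_realfun ring lra.
Set Implicit Arguments.
Unset Strict Implicit.
Unset Printing Implicit Defensive.
Import Order.TTheory GRing.Theory Num.Theory.
Import numFieldNormedType.Exports.
Local Open Scope classical_set_scope.
Local Open Scope ring_scope.

(* Put q := 1 + theta / kappa and follow the state (z^k, z^(k-1), hatF(z^(k-1))).
   For the Lyapunov function
     W = (1 + tau mu)|z - z*|^2 - 2 tau <F z - hatF(z_prev), z - z*>
         + (gamma + 4 tau^2 L^2)|z - z_prev|^2 + 8 tau^2 |hatF(z_prev) - F z_prev|^2
   the obtuse-angle property of the projection, strong monotonicity, Lipschitz
   continuity and Young's inequality give
     q W(next) <= W - tau mu |z - z*|^2 + 8 (1 + q) tau^2 |e|^2 + 2 tau |e| |z - z*|,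
   e being the oracle error at z: the step-size conditions are exactly what makes
   the leftover multiples of |z^(k+1) - z*|^2 and |z^(k+1) - z^k|^2 nonpositive.
   Averaging over the fresh sample bounds |e|^2 by sigma^2 and |e| by delta, and
   the term delta |z - z*| is absorbed by tau mu |z - z*|^2 (AM-GM), so E[2 W]
   contracts by the factor 1/q up to an additive constant.  Iterating over the
   independent samples, using |z - z*|^2 <= 2 W and summing the geometric series
   (1/(1 - 1/q) = kappa/theta + 1) gives the bound; the first step, in which
   hatF(z^(-1)) is the current sample, gets its own estimate. *)

(** * Inner products on R^n *)

Section Dotv.
Context {R : realType} {n : nat}.
Implicit Types u v w : 'rV[R]_n.

Lemma dotvC u v : dotv u v = dotv v u.
Proof. by apply: eq_bigr => i _; rewrite mulrC. Qed.

Lemma dotvDl u v w : dotv (u + v) w = dotv u w + dotv v w.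
Proof. by rewrite /dotv -big_split; apply: eq_bigr => i _; rewrite !mxE mulrDl. Qed.

Lemma dotvNl u w : dotv (- u) w = - dotv u w.
Proof. by rewrite /dotv -sumrN; apply: eq_bigr => i _; rewrite !mxE mulNr. Qed.

Lemma dotvZl a u w : dotv (a *: u) w = a * dotv u w.
Proof. by rewrite /dotv mulr_sumr; apply: eq_bigr => i _; rewrite !mxE mulrA. Qed.

Lemma dotvBl u v w : dotv (u - v) w = dotv u w - dotv v w.
Proof. by rewrite dotvDl dotvNl. Qed.

Lemma dotvDr u v w : dotv w (u + v) = dotv w u + dotv w v.
Proof. by rewrite dotvC dotvDl !(dotvC w). Qed.

Lemma dotvNr u w : dotv w (- u) = - dotv w u.
Proof. by rewrite dotvC dotvNl dotvC. Qed.

Lemma dotvBr u v w : dotv w (u - v) = dotv w u - dotv w v.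
Proof. by rewrite dotvDr dotvNr. Qed.

Lemma dotvZr a u w : dotv w (a *: u) = a * dotv w u.
Proof. by rewrite dotvC dotvZl dotvC. Qed.

Lemma dotv0l w : dotv 0 w = 0.
Proof. by rewrite /dotv big1 // => i _; rewrite mxE mul0r. Qed.

Lemma dotvBDBl u v w x y : dotv (u - v + w - x) y = dotv u y - dotv v y + dotv w y - dotv x y.
Proof. by rewrite !dotvBl dotvDl dotvBl. Qed.

Lemma dotvv_ge0 u : 0 <= dotv u u.
Proof. by rewrite /dotv sumr_ge0 // => i _; rewrite -expr2 sqr_ge0. Qed.

Lemma dotvv_eq0 u : dotv u u = 0 -> u = 0.
Proof.
move=> /eqP; rewrite /dotv psumr_eq0 => [/allP u0|i _]; last by rewrite -expr2 sqr_ge0.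
apply/rowP => i; rewrite mxE.
by apply/eqP; rewrite -sqrf_eq0 expr2; exact: u0 (mem_index_enum i).
Qed.

Lemma normv_ge0 u : 0 <= normv u.
Proof. exact: sqrtr_ge0. Qed.

Lemma normv_sqr u : normv u ^+ 2 = dotv u u.
Proof. by rewrite sqr_sqrtr // dotvv_ge0. Qed.

Lemma normvN u : normv (- u) = normv u.
Proof. by rewrite /normv dotvNl dotvNr opprK. Qed.

Lemma dotvvB u v : dotv (u - v) (u - v) = dotv u u - 2 * dotv u v + dotv v v.
Proof. by rewrite dotvBl !dotvBr (dotvC v u); ring. Qed.

Lemma dotv_young u v t c : 0 < c ->
  2 * t * dotv u v <= c * t ^+ 2 * dotv u u + dotv v v / c.
Proof.
move=> c_gt0; have cV_gt0 : 0 < c^-1 by rewrite invr_gt0.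
have := dotvv_ge0 ((c * t) *: u - v).
rewrite dotvvB !dotvZl !dotvZr -(pmulr_rge0 _ cV_gt0) => h.
have c_neq0 : c != 0 by rewrite gt_eqF.
rewrite -subr_ge0; suff -> : c * t ^+ 2 * dotv u u + dotv v v / c - 2 * t * dotv u v =
  c^-1 * (c * t * (c * t * dotv u u) - 2 * (c * t * dotv u v) + dotv v v) by [].
by field.
Qed.

Lemma dotvvB_le u v : dotv (u - v) (u - v) <= 2 * dotv u u + 2 * dotv v v.
Proof.
have := dotv_young u v (-1) ltr01.
by rewrite dotvvB sqrrN expr1n mul1r divr1; lra.
Qed.

Lemma dotv_le_normv u v : dotv u v <= normv u * normv v.
Proof.
have [u0|u_neq0] := eqVneq (normv u) 0.
  move: u0 => /(congr1 (fun x => x ^+ 2)); rewrite normv_sqr expr0n => /dotvv_eq0 ->.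
  by rewrite dotv0l mulr_ge0 ?normv_ge0.
have [v0|v_neq0] := eqVneq (normv v) 0.
  move: v0 => /(congr1 (fun x => x ^+ 2)); rewrite normv_sqr expr0n => /dotvv_eq0 ->.
  by rewrite dotvC dotv0l mulr_ge0 ?normv_ge0.
have u_gt0 : 0 < normv u by rewrite lt_neqAle eq_sym u_neq0 normv_ge0.
have v_gt0 : 0 < normv v by rewrite lt_neqAle eq_sym v_neq0 normv_ge0.
(* Young's inequality with the optimal weight [normv v / normv u] *)
have := dotv_young u v 1 (divr_gt0 v_gt0 u_gt0).
rewrite -!normv_sqr expr1n !mulr1.
have -> : normv v / normv u * normv u ^+ 2 + normv v ^+ 2 / (normv v / normv u)
  = 2 * (normv u * normv v) by field; rewrite u_neq0 v_neq0.
lra.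
Qed.

End Dotv.

(** * Projection onto a convex set *)

Section Projection.
Local Open Scope convex_scope.
Variables (R : realType) (n : nat) (Z : set 'rV[R]_n) (PZ : 'rV[R]_n -> 'rV[R]_n).
Hypotheses (convZ : convex_set Z) (hP : is_projection Z PZ).

(* If the angle at [PZ x] were acute, moving from [PZ x] towards [y] along the
   segment, which stays in [Z], would get strictly closer to [x]. *)
Lemma projection_obtuse x y : Z y -> dotv (x - PZ x) (y - PZ x) <= 0.
Proof.
move=> Zy; have [Zp p_min] := hP x.
set p := PZ x in Zp p_min *; set u := x - p; set v := y - p.
rewrite leNgt; apply/negP => uv_gt0.
set uv := dotv u v in uv_gt0 *; set vv := dotv v v.
have vv_ge0 : 0 <= vv by exact: dotvv_ge0.
set t := uv / (uv + vv).
have t_ge0 : 0 <= t by apply: divr_ge0; lra.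
have t_le1 : t <= 1 by rewrite ler_pdivrMr ?mul1r; lra.
have t_gt0 : 0 < t by apply: divr_gt0; lra.
have Zt : Z ((y : convex_lmodType _) <| Itv01 t_ge0 t_le1 |> p).
  by apply: set_mem; apply: convZ; apply: mem_set.
have := p_min _ Zt.
have -> : (y : convex_lmodType _) <| Itv01 t_ge0 t_le1 |> p = t *: y + (1 - t) *: p by [].
have -> : x - (t *: y + (1 - t) *: p) = u - t *: v.
  by apply/rowP => i; rewrite !mxE; ring.
rewrite ler_sqrt ?dotvv_ge0 // [X in _ <= X]dotvvB !dotvZr !dotvZl -/uv -/vv => h.
have tuv : t * (uv + vv) = uv by rewrite /t mulrAC -mulrA divff ?mulr1 // gt_eqF; lra.
have : 2 * uv - t * vv <= 0 by rewrite -(pmulr_rle0 _ t_gt0); lra.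
have : 0 < t * uv by exact: mulr_gt0.
lra.
Qed.

End Projection.

(** * Nonnegative integrals and iterated expectations *)

Section NonnegIntegral.
Context {d : measure_display} {T : measurableType d} {R : realType}.
Local Open Scope ereal_scope.

(* No measurability is needed: the integral of a nonnegative function is the
   supremum of the integrals of its simple minorants. *)
Lemma ge0_le_integralT (mu : {measure set T -> \bar R}) (f g : T -> \bar R) :
  (forall x, 0 <= f x) -> (forall x, f x <= g x) ->
  \int[mu]_x f x <= \int[mu]_x g x.
Proof.
move=> f_ge0 fg; have g_ge0 x : 0 <= g x by exact: le_trans (fg x).
rewrite (ge0_integralTE mu f_ge0) (ge0_integralTE mu g_ge0).
apply: ereal_sup_le => _ [h hf <-]; exists h => //= x.
exact: le_trans (hf x) (fg x).
Qed.

Variable P : probability T R.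

Lemma integral_affine2_le (f g : T -> R) (a b c A B : R) :
  measurable_fun setT f -> measurable_fun setT g ->
  (forall x, (0 <= f x)%R) -> (forall x, (0 <= g x)%R) ->
  (0 <= a)%R -> (0 <= b)%R -> (0 <= c)%R ->
  \int[P]_x (f x)%:E <= A%:E -> \int[P]_x (g x)%:E <= B%:E ->
  \int[P]_x (c + a * f x + b * g x)%:E <= (c + a * A + b * B)%:E.
Proof.
move=> mf mg f_ge0 g_ge0 a_ge0 b_ge0 c_ge0 If Ig.
have mEf : measurable_fun setT (fun x => (f x)%:E) by exact/measurable_EFinP.
have mEg : measurable_fun setT (fun x => (g x)%:E) by exact/measurable_EFinP.
have af_ge0 x : setT x -> 0 <= a%:E * (f x)%:E by move=> _; rewrite mule_ge0 ?lee_fin.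
have bg_ge0 x : setT x -> 0 <= b%:E * (g x)%:E by move=> _; rewrite mule_ge0 ?lee_fin.
under eq_integral do rewrite !EFinD !EFinM.
rewrite ge0_integralD //=; first last.
- exact: emeasurable_funM.
- by apply: emeasurable_funD => //; exact: emeasurable_funM.
- by move=> x _; apply: adde_ge0; [rewrite lee_fin | exact: af_ge0].
rewrite ge0_integralD //=; last exact: emeasurable_funM.
rewrite integral_cst //= (_ : P setT = 1) ?probability_setT // mule1.
rewrite ge0_integralZl //=; last by move=> x _; rewrite lee_fin.
rewrite ge0_integralZl //=; last by move=> x _; rewrite lee_fin.
by rewrite !EFinD !EFinM !leeD // lee_wpmul2l // lee_fin.
Qed.

Lemma integral_affine_le (f : T -> R) (a c A : R) :
  measurable_fun setT f -> (forall x, (0 <= f x)%R) -> (0 <= a)%R -> (0 <= c)%R ->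
  \int[P]_x (f x)%:E <= A%:E -> \int[P]_x (c + a * f x)%:E <= (c + a * A)%:E.
Proof.
move=> mf f_ge0 a_ge0 c_ge0 If.
have := integral_affine2_le mf mf f_ge0 f_ge0 a_ge0 (lexx 0) c_ge0 If If.
by rewrite mul0r addr0; under eq_integral do rewrite mul0r addr0.
Qed.

End NonnegIntegral.

Section IteratedExpectation.
Context {d : measure_display} {X : measurableType d} {R : realType}.
Variable P : probability X R.
Local Open Scope ereal_scope.

Lemma iexp_ge0 k f : (forall s, 0 <= f s) -> 0 <= iexp P k f.
Proof.
elim: k f => [|k IHk] f f_ge0 /=; first exact: f_ge0.
by apply: integral_ge0 => x _; apply: IHk.
Qed.

Lemma iexp_le k f g : (forall s, 0 <= f s) -> (forall s, f s <= g s) ->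
  iexp P k f <= iexp P k g.
Proof.
elim: k f g => [|k IHk] f g f_ge0 fg /=; first exact: fg.
by apply: ge0_le_integralT => x; [exact: iexp_ge0 | exact: IHk].
Qed.

Variables (S : Type) (T : S -> X -> S).

Fixpoint trajectory (st : S) (s : nat -> X) (m : nat) : S :=
  if m is m'.+1 then trajectory (T st (s 0%N)) (fun j => s j.+1) m' else st.

Lemma trajectoryS st s m : trajectory st s m.+1 = T (trajectory st s m) (s m).
Proof. by elim: m st s => [|m IHm] st s //=; rewrite -IHm. Qed.

Variables (Inv : S -> Prop) (V : S -> R) (r b : R).
Hypotheses (r_ge0 : (0 <= r)%R) (b_ge0 : (0 <= b)%R).
Hypothesis Inv_T : forall st x, Inv st -> Inv (T st x).
Hypothesis V_ge0 : forall st, Inv st -> (0 <= V st)%R.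
Hypothesis V_T_le : forall st, Inv st ->
  exists2 h : X -> R, measurable_fun setT h /\ (forall x, (V (T st x) <= h x)%R)
    & \int[P]_x (h x)%:E <= (r * V st + b)%:E.

Lemma trajectory_Inv st s m : Inv st -> Inv (trajectory st s m).
Proof. by elim: m st s => [|m IHm] st s Ist //=; apply/IHm/Inv_T. Qed.

Lemma iexp_trajectory_le m st : Inv st ->
  iexp P m (fun s => (V (trajectory st s m))%:E)
  <= (r ^+ m * V st + b * \sum_(j < m) r ^+ j)%:E.
Proof.
elim: m st => [|m IHm] st Ist /=.
  by rewrite expr0 mul1r big_ord0 mulr0 addr0.
have [h [mh Vh] Ih] := V_T_le Ist.
have h_ge0 x : (0 <= h x)%R by exact: le_trans (V_ge0 (Inv_T x Ist)) (Vh x).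
have G_ge0 : (0 <= b * \sum_(j < m) r ^+ j)%R.
  by rewrite mulr_ge0 // sumr_ge0 // => j _; rewrite exprn_ge0.
apply: (@le_trans _ _ (\int[P]_x (b * \sum_(j < m) r ^+ j + r ^+ m * h x)%:E)).
  apply: ge0_le_integralT => x.
    by apply: iexp_ge0 => s; rewrite lee_fin V_ge0 //; apply/trajectory_Inv/Inv_T.
  apply: le_trans (IHm _ (Inv_T x Ist)) _; rewrite lee_fin addrC lerD2l.
  by rewrite ler_wpM2l ?exprn_ge0.
apply: le_trans (integral_affine_le mh h_ge0 (exprn_ge0 m r_ge0) G_ge0 Ih) _.
by rewrite lee_fin big_ord_recr exprSr /=; lra.
Qed.

End IteratedExpectation.

(** * The stochastic extra-momentum scheme *)

Lemma measurable_coord (R : realType) (n : nat) (i : 'I_n) :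
  measurable_fun setT (fun v : vecB R n => (v : 'rV[R]_n) ord0 i).
Proof.
apply: (measurability _ (RGenOpens.measurableE R)).
move=> _ [_ [a [b ->]] <-]; apply: sub_sigma_algebra.
rewrite setTI; apply: (continuousP _).1; first exact: coord_continuous.
exact: interval_open.
Qed.

(* The additive constant in the one-step contraction of [2 * lyap] below: the
   oracle variance, and the bias [delta] after absorption by strong monotonicity. *)
Definition noise_const (R : realType) (mu q tau sigma delta : R) : R :=
  32 * tau ^+ 2 * sigma ^+ 2 + 2 * tau * delta ^+ 2 / (q * mu).

Lemma sigma_le_noise_const (R : realType) (mu q tau sigma delta : R) :
  0 < mu -> 0 < q -> 0 <= tau ->
  32 * tau ^+ 2 * sigma ^+ 2 <= noise_const mu q tau sigma delta.
Proof.
move=> mu_gt0 q_gt0 tau_ge0; rewrite /noise_const lerDl divr_ge0 //.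
  by rewrite mulr_ge0 ?sqr_ge0 // mulr_ge0 ?ler0n.
by rewrite mulr_ge0 // ltW.
Qed.

Lemma noise_const_ge0 (R : realType) (mu q tau sigma delta : R) :
  0 < mu -> 0 < q -> 0 <= tau -> 0 <= noise_const mu q tau sigma delta.
Proof.
move=> mu_gt0 q_gt0 tau_ge0; apply: le_trans (sigma_le_noise_const _ _ mu_gt0 q_gt0 tau_ge0).
by rewrite mulr_ge0 ?sqr_ge0 // mulr_ge0 ?sqr_ge0 ?ler0n.
Qed.

Lemma noise_absorb (R : realType) (mu q tau sigma delta x : R) :
  0 < mu -> 1 <= q -> 0 <= tau ->
  q^-1 * (16 * (1 + q) * tau ^+ 2 * sigma ^+ 2 + 4 * tau * x * delta - 2 * tau * mu * x ^+ 2)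
  <= noise_const mu q tau sigma delta.
Proof.
move=> mu_gt0 q_ge1 tau_ge0; have q_gt0 : 0 < q by exact: lt_le_trans ltr01 q_ge1.
have qV_le1 : q^-1 <= 1 by rewrite invf_le1.
have sigma_term : q^-1 * (16 * (1 + q) * tau ^+ 2 * sigma ^+ 2)
    <= 32 * tau ^+ 2 * sigma ^+ 2.
  have -> : q^-1 * (16 * (1 + q) * tau ^+ 2 * sigma ^+ 2)
      = 16 * (q^-1 + 1) * (tau ^+ 2 * sigma ^+ 2) by field; rewrite gt_eqF.
  have := mulr_ge0 (sqr_ge0 tau) (sqr_ge0 sigma); nra.
(* AM-GM: the linear term in [x] is absorbed by the quadratic one *)
have delta_term : q^-1 * (4 * tau * x * delta - 2 * tau * mu * x ^+ 2)
    <= 2 * tau * delta ^+ 2 / (q * mu).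
  have -> : 2 * tau * delta ^+ 2 / (q * mu) = q^-1 * (4 * tau * x * delta
      - 2 * tau * mu * x ^+ 2 + 2 * tau / mu * (mu * x - delta) ^+ 2).
    by field; rewrite !gt_eqF.
  rewrite ler_pM2l ?invr_gt0 // lerDl.
  apply: mulr_ge0; [apply: divr_ge0 | exact: sqr_ge0]; lra.
by rewrite /noise_const -addrA mulrDr lerD.
Qed.

Section ExtraMomentum.
Variables (R : realType) (n : nat) (Z : set 'rV[R]_n) (F : 'rV[R]_n -> 'rV[R]_n)
  (mu L : R) (zs : 'rV[R]_n) (PZ : 'rV[R]_n -> 'rV[R]_n)
  (d : measure_display) (Xi : measurableType d) (P : probability Xi R)
  (Fh : 'rV[R]_n -> Xi -> 'rV[R]_n) (delta sigma alpha gamma tau q : R)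
  (z0 : 'rV[R]_n).

Local Notation sqv u := (dotv u u).

Hypotheses (convZ : convex_set Z) (hP : is_projection Z PZ).
Hypothesis hmono : forall z z', Z z -> Z z' ->
  mu * normv (z - z') ^+ 2 <= dotv (F z - F z') (z - z').
Hypothesis hlip : forall z z', Z z -> Z z' -> normv (F z - F z') <= L * normv (z - z').
Hypotheses (Zzs : Z zs) (hopt : forall z, Z z -> 0 <= dotv (F zs) (z - zs)).
Hypotheses (mu_gt0 : 0 < mu) (L_ge0 : 0 <= L).
Hypotheses (gamma_ge0 : 0 <= gamma) (tau_gt0 : 0 < tau) (q_ge1 : 1 <= q).
Hypothesis alpha_eq : alpha = tau * q.
Hypothesis C1 : q <= 1 + alpha * mu - gamma.
Hypothesis C3 : q * (gamma + 4 * tau ^+ 2 * L ^+ 2) <= 1 / 2.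

Let q_gt0 : 0 < q := lt_le_trans ltr01 q_ge1.
Let qV_ge0 : 0 <= q^-1. Proof. by rewrite invr_ge0 ltW. Qed.

Record sem_point := SemPoint { cur : 'rV[R]_n; prev : 'rV[R]_n; Fprev : 'rV[R]_n }.

Definition next (S : sem_point) (x : Xi) : sem_point :=
  let z := cur S in let g := Fh z x in
  SemPoint (PZ (z - alpha *: g + gamma *: (z - prev S) - tau *: (g - Fprev S))) z g.

Definition lyap (S : sem_point) : R :=
  (1 + tau * mu) * sqv (cur S - zs) - 2 * tau * dotv (F (cur S) - Fprev S) (cur S - zs)
  + (gamma + 4 * tau ^+ 2 * L ^+ 2) * sqv (cur S - prev S)
  + 8 * tau ^+ 2 * sqv (Fprev S - F (prev S)).

Lemma PZ_in x : Z (PZ x).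
Proof. by case: (hP x). Qed.

Lemma next_in S x : Z (cur S) -> Z (cur (next S x)) /\ Z (prev (next S x)).
Proof. by move=> Zz; split => //=; exact: PZ_in. Qed.

Lemma lipschitz_sqv z z' : Z z -> Z z' -> sqv (F z - F z') <= L ^+ 2 * sqv (z - z').
Proof.
move=> Zz Zz'; rewrite -!normv_sqr -exprMn.
by rewrite lerXn2r ?nnegrE ?mulr_ge0 ?normv_ge0 ?hlip.
Qed.

Lemma alpha_ge0 : 0 <= alpha.
Proof. by rewrite alpha_eq mulr_ge0 ?ltW. Qed.

Lemma projected_step z zp g fh
    (z' := PZ (z - alpha *: fh + gamma *: (z - zp) - tau *: (fh - g))) :
  sqv (z' - zs) + sqv (z' - z) - sqv (z - zs) <=
  - 2 * alpha * mu * sqv (z' - zs) + 2 * alpha * dotv (F z' - fh) (z' - zs)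
  + 2 * gamma * dotv (z - zp) (z' - zs) - 2 * tau * dotv (fh - g) (z' - zs).
Proof.
set w := z - alpha *: fh + gamma *: (z - zp) - tau *: (fh - g).
have Zz' : Z z' := PZ_in w.
have := projection_obtuse convZ hP w Zzs; rewrite -/z' -(opprB z' zs) dotvNr oppr_le0.
have -> : w - z' = - (z' - z) - alpha *: fh + gamma *: (z - zp) - tau *: (fh - g).
  by apply/rowP => i; rewrite !mxE; ring.
rewrite dotvBDBl dotvNl !dotvZl => obtuse.
have split_fh : dotv fh (z' - zs) = dotv (F z') (z' - zs) - dotv (F z' - fh) (z' - zs).
  by rewrite dotvBl; ring.
rewrite split_fh in obtuse.
have mono : alpha * (mu * sqv (z' - zs)) <=
    alpha * (dotv (F z') (z' - zs) - dotv (F zs) (z' - zs)).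
  by rewrite ler_wpM2l ?alpha_ge0 // -normv_sqr -dotvBl hmono.
have opt := mulr_ge0 alpha_ge0 (hopt Zz').
have -> : sqv (z - zs) = sqv (z' - zs) - 2 * dotv (z' - z) (z' - zs) + sqv (z' - z).
  have -> : z - zs = (z' - zs) - (z' - z) by apply/rowP => i; rewrite !mxE; ring.
  by rewrite [LHS]dotvvB (dotvC (z' - zs)).
lra.
Qed.

(* The pieces of the cross term pairing with [z' - z] are absorbed by Young's
   inequality into [sqv (z' - z) / 2]; the rest feeds the Lyapunov function. *)
Lemma cross_term_le z zp g fh z' : Z z -> Z zp ->
  - 2 * tau * dotv (fh - g) (z' - zs) <=
  - 2 * tau * dotv (F z - g) (z - zs) + 2 * tau * (normv (fh - F z) * normv (z - zs))
  + 4 * tau ^+ 2 * L ^+ 2 * sqv (z - zp) + 8 * tau ^+ 2 * sqv (g - F zp)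
  + 8 * tau ^+ 2 * sqv (fh - F z) + sqv (z' - z) / 2.
Proof.
move=> Zz Zzp.
have -> : dotv (fh - g) (z' - zs) = dotv (F z - g) (z - zs) + dotv (fh - F z) (z - zs)
    + dotv (F z - F zp) (z' - z) - dotv (g - F zp) (z' - z) + dotv (fh - F z) (z' - z).
  by rewrite !(dotvDl, dotvNl, dotvDr, dotvNr); ring.
have Y1 := dotv_young (F z - F zp) (z' - z) (- tau) (ltr0n _ 4).
have Y2 := dotv_young (g - F zp) (z' - z) tau (ltr0n _ 8).
have Y3 := dotv_young (fh - F z) (z' - z) (- tau) (ltr0n _ 8).
rewrite sqrrN in Y1 Y3.
have CS : 2 * tau * - dotv (fh - F z) (z - zs) <= 2 * tau * (normv (fh - F z) * normv (z - zs)).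
  apply: ler_wpM2l; first by rewrite mulr_ge0 ?ltW.
  by rewrite -dotvNl -(normvN (fh - F z)); exact: dotv_le_normv.
have Lip : 4 * tau ^+ 2 * sqv (F z - F zp) <= 4 * tau ^+ 2 * (L ^+ 2 * sqv (z - zp)).
  by apply: ler_wpM2l; [rewrite mulr_ge0 ?sqr_ge0 | exact: lipschitz_sqv].
lra.
Qed.

Lemma lyap_next_le S x : Z (cur S) -> Z (prev S) ->
  q * lyap (next S x) <= lyap S - tau * mu * sqv (cur S - zs)
    + 8 * (1 + q) * tau ^+ 2 * sqv (Fh (cur S) x - F (cur S))
    + 2 * tau * (normv (Fh (cur S) x - F (cur S)) * normv (cur S - zs)).
Proof.
case: S => z zp g /= Zz Zzp; rewrite /lyap /=.
set fh := Fh z x; set z' := PZ _.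
have /= step := projected_step z zp g fh; rewrite -/z' in step.
have cross := cross_term_le g fh z' Zz Zzp.
have Yg : gamma * (2 * dotv (z - zp) (z' - zs)) <= gamma * (sqv (z - zp) + sqv (z' - zs)).
  apply: ler_wpM2l => //; have := dotv_young (z - zp) (z' - zs) 1 ltr01.
  by rewrite expr1n !mulr1 mul1r divr1.
have C1' : (q + alpha * mu) * sqv (z' - zs) <= (1 + 2 * alpha * mu - gamma) * sqv (z' - zs).
  by apply: ler_wpM2r; [exact: dotvv_ge0 | move: C1 gamma_ge0; lra].
have C3' : q * (gamma + 4 * tau ^+ 2 * L ^+ 2) * sqv (z' - z) <= 1 / 2 * sqv (z' - z).
  by apply: ler_wpM2r; [exact: dotvv_ge0 | exact: C3].
rewrite alpha_eq in step C1'.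
lra.
Qed.

Definition start (x : Xi) : sem_point := SemPoint z0 z0 (Fh z0 x).

Lemma lyap_next_start_le x :
  q * lyap (next (start x) x) <= sqv (z0 - zs) + 8 * q * tau ^+ 2 * sqv (Fh z0 x - F z0).
Proof.
rewrite /lyap /=; set fh := Fh z0 x; set z' := PZ _.
have /= step := projected_step z0 z0 fh fh; rewrite -/z' !subrr !dotv0l in step.
have C1' : (q + alpha * mu) * sqv (z' - zs) <= (1 + 2 * alpha * mu) * sqv (z' - zs).
  by apply: ler_wpM2r; [exact: dotvv_ge0 | move: C1 gamma_ge0; lra].
have C3' : q * (gamma + 4 * tau ^+ 2 * L ^+ 2) * sqv (z' - z0) <= 1 * sqv (z' - z0).
  by apply: ler_wpM2r; [exact: dotvv_ge0 | move: C3; lra].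
rewrite alpha_eq in step C1'.
lra.
Qed.

Lemma lyap_lower_bound S : Z (cur S) -> Z (prev S) ->
  sqv (cur S - zs) <= 2 * (lyap S - tau * mu * sqv (cur S - zs)).
Proof.
case: S => z zp g /= Zz Zzp; rewrite /lyap /=.
have Y := dotv_young (F z - g) (z - zs) tau (ltr0n _ 2).
have split_g : 2 * tau ^+ 2 * sqv (F z - g)
    <= 2 * tau ^+ 2 * (2 * sqv (F z - F zp) + 2 * sqv (g - F zp)).
  apply: ler_wpM2l; first by rewrite mulr_ge0 ?sqr_ge0.
  have -> : F z - g = (F z - F zp) - (g - F zp) by rewrite opprB addrA subrK.
  exact: dotvvB_le.
have Lip : 4 * tau ^+ 2 * sqv (F z - F zp) <= 4 * tau ^+ 2 * (L ^+ 2 * sqv (z - zp)).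
  by apply: ler_wpM2l; [rewrite mulr_ge0 ?sqr_ge0 | exact: lipschitz_sqv].
have := mulr_ge0 gamma_ge0 (dotvv_ge0 (z - zp)).
have := mulr_ge0 (sqr_ge0 tau) (dotvv_ge0 (g - F zp)).
lra.
Qed.

Hypothesis hmeas :
  measurable_fun setT (fun p : (vecB R n * Xi)%type => (Fh p.1 p.2 : vecB R n)).

Lemma measurable_noise z : measurable_fun setT (fun x => normv (Fh z x - F z)).
Proof.
have mFh : measurable_fun setT (fun x => (Fh z x : vecB R n)).
  exact: (measurable_fun_pair2 (z : vecB R n) hmeas).
have -> : (fun x => normv (Fh z x - F z)) = Num.sqrt \o (fun x =>
    \sum_(i < n) (Fh z x ord0 i - F z ord0 i) * (Fh z x ord0 i - F z ord0 i)).
  by apply/funext => x /=; congr Num.sqrt; apply: eq_bigr => i _; rewrite !mxE.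
have msqrt : measurable_fun setT (@Num.sqrt R).
  by apply: continuous_measurable_fun; exact: sqrt_continuous.
apply: (measurableT_comp msqrt).
apply: measurable_sum => i.
have mFi : measurable_fun setT (fun x => Fh z x ord0 i - F z ord0 i).
  exact: measurable_funB (measurableT_comp (measurable_coord i) mFh) (measurable_cst _).
exact: measurable_funM.
Qed.

Hypothesis hd : forall z, Z z -> (\int[P]_x (normv (Fh z x - F z))%:E <= delta%:E)%E.
Hypothesis hs :
  forall z, Z z -> (\int[P]_x (normv (Fh z x - F z) ^+ 2)%:E <= (sigma ^+ 2)%:E)%E.

Lemma measurable_affine_noise z (K k1 k2 : R) : measurable_fun setT
  (fun x => K + k1 * normv (Fh z x - F z) ^+ 2 + k2 * normv (Fh z x - F z)).
Proof.
have mN := measurable_noise z.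
apply: measurable_funD; last exact: measurable_funM.
by apply: measurable_funD => //; apply: measurable_funM => //; exact: measurable_funX.
Qed.

Lemma expected_lyap_next S : Z (cur S) -> Z (prev S) ->
  exists2 h : Xi -> R, measurable_fun setT h /\ (forall x, 2 * lyap (next S x) <= h x)
    & (\int[P]_x (h x)%:E <= (q^-1 * (2 * lyap S) + noise_const mu q tau sigma delta)%:E)%E.
Proof.
move=> Zz Zzp; set z := cur S; set nD := normv (z - zs).
set K := q^-1 * (2 * (lyap S - tau * mu * nD ^+ 2)).
set k1 := q^-1 * (16 * (1 + q) * tau ^+ 2).
set k2 := q^-1 * (4 * tau * nD).
have K_ge0 : 0 <= K.
  rewrite /K /nD normv_sqr mulr_ge0 //.
  by have := lyap_lower_bound Zz Zzp; rewrite -/z; have := dotvv_ge0 (z - zs); lra.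
have k1_ge0 : 0 <= k1.
  by apply: mulr_ge0 => //; apply: mulr_ge0; [move: q_ge1; lra | exact: sqr_ge0].
have k2_ge0 : 0 <= k2.
  by apply: mulr_ge0 => //; apply: mulr_ge0; [move: tau_gt0; lra | exact: normv_ge0].
exists (fun x => K + k1 * normv (Fh z x - F z) ^+ 2 + k2 * normv (Fh z x - F z)).
  split; first exact: measurable_affine_noise.
  move=> x; have := lyap_next_le x Zz Zzp; rewrite -/z => step.
  have -> : K + k1 * normv (Fh z x - F z) ^+ 2 + k2 * normv (Fh z x - F z) = 2 * (q^-1 *
      (lyap S - tau * mu * nD ^+ 2 + 8 * (1 + q) * tau ^+ 2 * normv (Fh z x - F z) ^+ 2
       + 2 * tau * (normv (Fh z x - F z) * nD))).
    by rewrite /K /k1 /k2; ring.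
  by rewrite ler_pM2l ?ltr0n // ler_pdivlMl // /nD !normv_sqr.
apply: le_trans (integral_affine2_le _ (measurable_noise z) _ _ k1_ge0 k2_ge0 K_ge0
  (hs Zz) (hd Zz)) _.
- exact: measurable_funX (measurable_noise z).
- by move=> x; rewrite sqr_ge0.
- by move=> x; rewrite normv_ge0.
rewrite lee_fin.
have := noise_absorb sigma delta nD mu_gt0 q_ge1 (ltW tau_gt0).
suff -> : K + k1 * sigma ^+ 2 + k2 * delta = q^-1 * (2 * lyap S) + q^-1 *
  (16 * (1 + q) * tau ^+ 2 * sigma ^+ 2 + 4 * tau * nD * delta - 2 * tau * mu * nD ^+ 2).
  by rewrite lerD2l.
by rewrite /K /k1 /k2; ring.
Qed.

Hypothesis Zz0 : Z z0.

Lemma expected_lyap_start :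
  exists2 h : Xi -> R,
    measurable_fun setT h /\ (forall x, 2 * lyap (next (start x) x) <= h x)
    & (\int[P]_x (h x)%:E
       <= (q^-1 * (2 * sqv (z0 - zs)) + noise_const mu q tau sigma delta)%:E)%E.
Proof.
set K := q^-1 * (2 * sqv (z0 - zs)).
have K_ge0 : 0 <= K by rewrite mulr_ge0 // mulr_ge0 ?dotvv_ge0.
have k1_ge0 : 0 <= 16 * tau ^+ 2 by rewrite mulr_ge0 ?sqr_ge0.
exists (fun x => K + 16 * tau ^+ 2 * normv (Fh z0 x - F z0) ^+ 2
                 + 0 * normv (Fh z0 x - F z0)).
  split; first exact: measurable_affine_noise.
  move=> x; have step := lyap_next_start_le x.
  have -> : K + 16 * tau ^+ 2 * normv (Fh z0 x - F z0) ^+ 2 + 0 * normv (Fh z0 x - F z0)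
      = 2 * (q^-1 * (sqv (z0 - zs) + 8 * q * tau ^+ 2 * normv (Fh z0 x - F z0) ^+ 2)).
    by rewrite /K; field; rewrite gt_eqF.
  by rewrite ler_pM2l ?ltr0n // ler_pdivlMl // normv_sqr.
apply: le_trans (integral_affine2_le _ (measurable_noise z0) _ _ k1_ge0 (lexx 0) K_ge0
  (hs Zz0) (hd Zz0)) _.
- exact: measurable_funX (measurable_noise z0).
- by move=> x; rewrite sqr_ge0.
- by move=> x; rewrite normv_ge0.
rewrite lee_fin mul0r addr0 lerD2l.
have := sigma_le_noise_const sigma delta mu_gt0 q_gt0 (ltW tau_gt0).
by have := mulr_ge0 (sqr_ge0 tau) (sqr_ge0 sigma); lra.
Qed.

(* [None] is the initial state: there the missing oracle value at [z^(-1)] is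
   the current sample at [z^0], as in [sem_state]. *)
Definition chain_step (o : option sem_point) (x : Xi) : option sem_point :=
  Some (next (odflt (start x) o) x).

Definition chain_lyap (o : option sem_point) : R :=
  if o is Some st then 2 * lyap st else 2 * sqv (z0 - zs).

Definition chain_in (o : option sem_point) : Prop :=
  if o is Some st then Z (cur st) /\ Z (prev st) else True.

Local Notation sem s k := (sem_state PZ Fh alpha gamma tau z0 s k).

Lemma trajectory_sem_state s k : trajectory chain_step None s k.+1
  = Some (SemPoint (sem s k.+1).1 (sem s k.+1).2 (Fh (sem s k.+1).2 (s k))).
Proof. by elim: k => [|k IHk] //; rewrite trajectoryS IHk. Qed.

Lemma chain_step_in o x : chain_in o -> chain_in (chain_step o x).
Proof.
by case: o => [st [Zc _]|_]; [exact: next_in x Zc | exact: (@next_in (start x) x Zz0)].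
Qed.

Lemma chain_lyap_ge0 o : chain_in o -> 0 <= chain_lyap o.
Proof.
case: o => [st [Zc Zp]|_] /=; last by rewrite mulr_ge0 ?dotvv_ge0.
have := lyap_lower_bound Zc Zp; have := dotvv_ge0 (cur st - zs).
have := mulr_ge0 (mulr_ge0 (ltW tau_gt0) (ltW mu_gt0)) (dotvv_ge0 (cur st - zs)).
lra.
Qed.

Lemma expected_chain_lyap o : chain_in o ->
  exists2 h : Xi -> R,
    measurable_fun setT h /\ (forall x, chain_lyap (chain_step o x) <= h x)
    & (\int[P]_x (h x)%:E
       <= (q^-1 * chain_lyap o + noise_const mu q tau sigma delta)%:E)%E.
Proof.
by case: o => [st [Zc Zp]|_]; [exact: expected_lyap_next | exact: expected_lyap_start].
Qed.

Lemma sem_iter_mean_sq_le k :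
  (iexp P k (fun s => (normv (sem_iter PZ Fh alpha gamma tau z0 s k - zs) ^+ 2)%:E)
   <= (2 * q^-1 ^+ k * sqv (z0 - zs)
       + noise_const mu q tau sigma delta * \sum_(j < k) q^-1 ^+ j)%:E)%E.
Proof.
have := iexp_trajectory_le qV_ge0
  (noise_const_ge0 sigma delta mu_gt0 q_gt0 (ltW tau_gt0)) chain_step_in chain_lyap_ge0 expected_chain_lyap k
  (I : chain_in None).
rewrite /= mulrCA mulrA; apply: le_trans; apply: iexp_le => s.
  by rewrite lee_fin sqr_ge0.
rewrite lee_fin /sem_iter normv_sqr; case: k => [|k].
  by have := dotvv_ge0 (z0 - zs); rewrite /=; lra.
have := trajectory_Inv chain_step_in s k.+1 (I : chain_in None).
rewrite trajectory_sem_state; set st := SemPoint _ _ _ => -[Zc Zp].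
rewrite -[(sem s k.+1).1]/(cur st) [chain_lyap _]/=.
have := lyap_lower_bound Zc Zp.
have := mulr_ge0 (mulr_ge0 (ltW tau_gt0) (ltW mu_gt0)) (dotvv_ge0 (cur st - zs)).
lra.
Qed.

End ExtraMomentum.

Lemma geometric_sum_le (R : realType) (r : R) k :
  0 <= r < 1 -> \sum_(j < k) r ^+ j <= (1 - r)^-1.
Proof.
move=> /andP[r_ge0 r_lt1]; rewrite -[(1 - r)^-1]mulr1 ler_pdivlMl ?subr_gt0 //.
have -> : (1 - r) * \sum_(j < k) r ^+ j = 1 - r ^+ k by rewrite -opprB mulNr -subrX1 opprB.
by have := exprn_ge0 k r_ge0; lra.
Qed.

Lemma div_eq_pos_den (R : realType) (x y c : R) : 0 <= y -> 0 < c -> x / y = c ->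
  0 < y /\ x = y * c.
Proof.
move=> y_ge0 c_gt0 xy; have y_gt0 : 0 < y.
  by rewrite lt_def y_ge0 andbT; apply: contraTneq c_gt0 => y0; rewrite -xy y0 invr0 mulr0 ltxx.
by split => //; rewrite -xy mulrCA divff ?mulr1 // gt_eqF.
Qed.

Lemma mul_le1_of_le_inv (R : realType) (x y : R) : 0 <= y -> x <= 1 / y -> x * y <= 1.
Proof.
move=> y_ge0; have [->|y_neq0] := eqVneq y 0; first by rewrite mulr0 ler01.
by rewrite ler_pdivlMr // lt_def y_neq0.
Qed.

Lemma noise_series_le (R : realType) (kappa theta mu tau alpha sigma delta : R) k :
  0 < kappa -> 0 < theta -> 0 < mu -> 0 < tau -> alpha = tau * (1 + theta / kappa) ->
  noise_const mu (1 + theta / kappa) tau sigma delta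
    * \sum_(j < k) (1 + theta / kappa)^-1 ^+ j
  <= (kappa / theta + 1) * 32 * tau ^+ 2 * sigma ^+ 2
     + 2 * kappa * alpha * delta ^+ 2 / (theta * mu).
Proof.
set q := 1 + theta / kappa => kappa_gt0 theta_gt0 mu_gt0 tau_gt0 alpha_eq.
have q_gt1 : 1 < q by rewrite /q ltrDl divr_gt0.
have q_gt0 : 0 < q := lt_trans ltr01 q_gt1.
have c_ge0 := noise_const_ge0 sigma delta mu_gt0 q_gt0 (ltW tau_gt0).
have r_bounds : 0 <= q^-1 < 1 by rewrite invr_ge0 ltW //= invf_lt1.
apply: le_trans (ler_wpM2l c_ge0 (geometric_sum_le k r_bounds)) _.
have -> : noise_const mu q tau sigma delta * (1 - q^-1)^-1 = (kappa / theta + 1) * 32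
    * tau ^+ 2 * sigma ^+ 2 + tau * (2 * kappa * delta ^+ 2 / (theta * mu)).
  by rewrite /noise_const /q; field; rewrite !gt_eqF ?addr_gt0.
have X_ge0 : 0 <= 2 * kappa * delta ^+ 2 / (theta * mu).
  apply: divr_ge0; last by rewrite mulr_ge0 // ltW.
  by rewrite mulr_ge0 ?sqr_ge0 // mulr_ge0 ?ler0n // ltW.
rewrite lerD2l alpha_eq.
have -> : 2 * kappa * (tau * q) * delta ^+ 2 / (theta * mu)
    = tau * (q * (2 * kappa * delta ^+ 2 / (theta * mu))) by ring.
by rewrite ler_pM2l // ler_peMl // ltW.
Qed.

Theorem theorem2 (R : realType) (n : nat) (Z : set 'rV[R]_n)
  (F : 'rV[R]_n -> 'rV[R]_n) (mu L : R) (zstar : 'rV[R]_n)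
  (PZ : 'rV[R]_n -> 'rV[R]_n)
  (d : measure_display) (Xi : measurableType d) (P : probability Xi R)
  (Fh : 'rV[R]_n -> Xi -> 'rV[R]_n) (delta sigma : R)
  (alpha gamma tau theta : R) (z0 : 'rV[R]_n) :
  Z !=set0 -> closed Z -> convex_set Z ->
  0 < mu -> mu <= L ->
  (forall z z', Z z -> Z z' -> mu * normv (z - z') ^+ 2 <= dotv (F z - F z') (z - z')) ->
  (forall z z', Z z -> Z z' -> normv (F z - F z') <= L * normv (z - z')) ->
  Z zstar -> (forall z, Z z -> 0 <= dotv (F zstar) (z - zstar)) ->
  is_projection Z PZ ->
  measurable_fun setT (fun p : (vecB R n * Xi)%type => (Fh p.1 p.2 : vecB R n)) ->
  0 <= delta -> 0 <= sigma ->
  (forall z, Z z -> (\int[P]_x (normv (Fh z x - F z))%:E <= delta%:E)%E) ->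
  (forall z, Z z -> (\int[P]_x (normv (Fh z x - F z) ^+ 2)%:E <= (sigma ^+ 2)%:E)%E) ->
  Z z0 ->
  0 <= alpha -> 0 <= gamma -> 0 <= tau ->
  0 < theta <= 1 ->
  1 + theta / (L / mu) <= 1 + alpha * mu - gamma ->
  alpha / tau = 1 + theta / (L / mu) ->
  1 + theta / (L / mu) <= 1 / (8 * tau ^+ 2 * L ^+ 2 + 2 * gamma) ->
  forall k : nat,
    (iexp P k (fun s => (normv (sem_iter PZ Fh alpha gamma tau z0 s k - zstar) ^+ 2)%:E)
     <= (2 * (1 + theta / (L / mu)) ^- k * normv (z0 - zstar) ^+ 2
         + (L / mu / theta + 1) * 32 * tau ^+ 2 * sigma ^+ 2
         + 2 * (L / mu) * alpha * delta ^+ 2 / (theta * mu))%:E)%E.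
Proof.
(* Nonemptiness and closedness of [Z] only matter for the existence of [PZ],
   which is assumed. *)
move=> _ _ convZ mu_gt0 muL hmono hlip Zzs hopt hP hmeas _ _ hd hs Zz0 _ gamma_ge0 tau_ge0
  /andP[theta_gt0 _] C1 ratio C3 k.
have kappa_gt0 : 0 < L / mu by rewrite divr_gt0 // (lt_le_trans mu_gt0 muL).
have q_ge1 : 1 <= 1 + theta / (L / mu) by rewrite lerDl ltW // divr_gt0.
have [tau_gt0 alpha_eq] := div_eq_pos_den tau_ge0 (lt_le_trans ltr01 q_ge1) ratio.
have C3' : (1 + theta / (L / mu)) * (gamma + 4 * tau ^+ 2 * L ^+ 2) <= 1 / 2.
  have X_ge0 : 0 <= 8 * tau ^+ 2 * L ^+ 2 + 2 * gamma.
    by have := mulr_ge0 (sqr_ge0 tau) (sqr_ge0 L); lra.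
  by have := mul_le1_of_le_inv X_ge0 C3; lra.
apply: le_trans (sem_iter_mean_sq_le convZ hP hmono hlip Zzs hopt mu_gt0
  (le_trans (ltW mu_gt0) muL) gamma_ge0 tau_gt0 q_ge1 alpha_eq C1 C3' hmeas hd hs Zz0 k) _.
rewrite lee_fin exprVn normv_sqr -addrA lerD2l.
exact: noise_series_le.
Qed.
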